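(* Let $n\ge 2$ and let $l$ be the correspondence defined on $\mathcal S_{\neq}$ by $l(S)=so(n)\setminus\mathcal L_{\mathrm{invar}}(o_1,\dots,o_n)$, where $o_1,\dots,o_n$ is an orthonormal basis of eigenvectors of $S$ (this is independent of the choice of such basis). Then $$\mathrm{Graph}(l)=\{(S,L):S\in\mathcal S_{\neq},\ L\in l(S)\}$$ is open and dense in $\mathcal S(n,\mathbb R)\times so(n)$ (product topology, each factor with the relative norm topology).
   Context: $\mathcal S(n,\mathbb R)$ denotes the real symmetric $n\times n$ matrices and $\mathcal S_{\neq}\subseteq\mathcal S(n,\mathbb R)$ those whose $n$ eigenvalues are pairwise distinct. $so(n)$ denotes the real skew-symmetric $n\times n$ matrices. For an orthonormal basis $o_1,\dots,o_n$ of $\mathbb R^n$, $\mathcal L_{\mathrm{invar}}(o_1,\dots,o_n)$ is the set of $L\in so(n)$ for which there exists a subset $\{o_{j_1},\dots,o_{j_k}\}$ with $1\le k<n$ such that $\mathrm{span}_{\mathbb R}\{o_{j_1},\dots,o_{j_k}\}$ is an invariant subspace of $L$. *)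

From Stdlib Require Import Reals.
From mathcomp Require Import all_boot.
Set Implicit Arguments. Unset Strict Implicit. Unset Printing Implicit Defensive.

Local Open Scope R_scope.

Definition vec (n : nat) := 'I_n -> R.
Definition mat (n : nat) := 'I_n -> 'I_n -> R.

Definition mulv n (A : mat n) (v : vec n) : vec n :=
  fun i => \big[Rplus/0]_(j < n) (A i j * v j).
Definition dot n (u v : vec n) : R := \big[Rplus/0]_(i < n) (u i * v i).

Definition symmetric n (A : mat n) : Prop := forall i j, A i j = A j i.
Definition skew n (A : mat n) : Prop := forall i j, A i j = - A j i.

Definition is_eigvec n (A : mat n) (v : vec n) (lam : R) : Prop :=
  (exists i, v i <> 0) /\ forall i, mulv A v i = lam * v i.

Definition distinct_eigs n (A : mat n) : Prop :=
  exists lam : 'I_n -> R, injective lam /\ forall i, exists v, is_eigvec A v (lam i).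

Definition orthonormal_basis n (o : 'I_n -> vec n) : Prop :=
  forall i j, dot (o i) (o j) = if i == j then 1 else 0.

Definition eigenbasis n (A : mat n) (o : 'I_n -> vec n) : Prop :=
  orthonormal_basis o /\ forall i, exists lam, is_eigvec A (o i) lam.

Definition in_span n (J : {set 'I_n}) (o : 'I_n -> vec n) (v : vec n) : Prop :=
  exists c : 'I_n -> R, forall i, v i = \big[Rplus/0]_(j in J) (c j * o j i).

Definition invariant n (L : mat n) (V : vec n -> Prop) : Prop :=
  forall v, V v -> V (mulv L v).

Definition L_invar n (o : 'I_n -> vec n) (L : mat n) : Prop :=
  skew L /\
  exists J : {set 'I_n}, (0 < #|J|)%N /\ (#|J| < n)%N /\ invariant L (in_span J o).

Definition graph_l n (S L : mat n) : Prop :=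
  symmetric S /\ distinct_eigs S /\ skew L /\
  exists o, eigenbasis S o /\ ~ L_invar o L.

(* max-entry distance < eps (a norm; all norms on the finite-dim space are
   equivalent, so this gives the norm topology) *)
Definition near n (eps : R) (A B : mat n) : Prop :=
  forall i j, Rabs (A i j - B i j) < eps.

Definition open_in_Sso n (G : mat n -> mat n -> Prop) : Prop :=
  forall S L, G S L -> symmetric S /\ skew L /\
    exists eps, 0 < eps /\ forall S' L', symmetric S' -> skew L' ->
      near eps S S' -> near eps L L' -> G S' L'.

Definition dense_in_Sso n (G : mat n -> mat n -> Prop) : Prop :=
  forall S L eps, symmetric S -> skew L -> 0 < eps ->
    exists S' L', G S' L' /\ near eps S S' /\ near eps L L'.

(* In an orthonormal eigenbasis [o] of [S], a skew [L] leaves no coordinate subspace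
   span {o_j | j in J} invariant iff for every proper nonempty [J] some coordinate
   <o_k, L o_j> with [j] in [J], [k] outside [J] is nonzero.
   Density: shift the eigenvalues of [S] along [o] by small distinct amounts, and fill every
   vanishing off-diagonal coordinate of [L] with a small skew-symmetric entry.
   Openness: for [S'] near [S] the eigenvalues stay simple and each eigenvector moves, up to
   sign, by O(|S' - S|^2 / gap^2) in squared norm, so the finitely many nonzero witness
   coordinates stay nonzero for [L'] near [L].
   The spectral theorem is proved along the way: on the orthogonal complement [W] of the
   eigenvectors found so far, the supremum [lam] of the Rayleigh quotient is an eigenvalue,
   because [lam - S + t P] ([P] the projection onto the complement of [W], [t] large) cannot
   be invertible. *)

From Stdlib Require Import Reals Lra Psatz Classical ClassicalEpsilon FunctionalExtensionality.
From mathcomp Require Import all_boot all_algebra.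
From mathcomp Require Import Rstruct.
Set Implicit Arguments. Unset Strict Implicit. Unset Printing Implicit Defensive.
Delimit Scope ring_scope with ring.
Local Open Scope R_scope.

Section RealSums.
Variable I : finType.
Implicit Types (P : pred I) (F G : I -> R).

Lemma sumR_ge0 P F : (forall i, P i -> 0 <= F i) -> 0 <= \big[Rplus/0]_(i | P i) F i.
Proof. by move=> h; apply: big_ind => //; [lra | move=> x y; lra]. Qed.

Lemma sumR_le P F G : (forall i, P i -> F i <= G i) ->
  \big[Rplus/0]_(i | P i) F i <= \big[Rplus/0]_(i | P i) G i.
Proof. by move=> h; apply: big_ind2 => //; [lra | move=> a b c d; lra]. Qed.

Lemma sumR_add P F G :
  \big[Rplus/0]_(i | P i) (F i + G i) = \big[Rplus/0]_(i | P i) F i + \big[Rplus/0]_(i | P i) G i.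
Proof. exact: big_split. Qed.

Lemma sumR_mull P a F : \big[Rplus/0]_(i | P i) (a * F i) = a * \big[Rplus/0]_(i | P i) F i.
Proof. by rewrite big_distrr. Qed.

Lemma sumR_mulr P a F : \big[Rplus/0]_(i | P i) (F i * a) = (\big[Rplus/0]_(i | P i) F i) * a.
Proof. by rewrite big_distrl. Qed.

Lemma sumR_ge_term F j : (forall i, 0 <= F i) -> F j <= \big[Rplus/0]_i F i.
Proof.
move=> h; rewrite (bigD1 j) //=.
have := @sumR_ge0 (fun i => i != j) F (fun i _ => h i); lra.
Qed.

Lemma sumR_ge_two_terms F j k : (forall i, 0 <= F i) -> j != k ->
  F j + F k <= \big[Rplus/0]_i F i.
Proof.
move=> h hjk; rewrite (bigD1 j) //= (bigD1 k) 1?eq_sym //=.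
have := @sumR_ge0 (fun i => (i != j) && (i != k)) F (fun i _ => h i); lra.
Qed.

Lemma sumR_eq0 F : (forall i, 0 <= F i) -> \big[Rplus/0]_i F i = 0 -> forall i, F i = 0.
Proof. by move=> h hs i; have := sumR_ge_term i h; have := h i; lra. Qed.

Lemma sumR_abs_le P F :
  Rabs (\big[Rplus/0]_(i | P i) F i) <= \big[Rplus/0]_(i | P i) Rabs (F i).
Proof.
apply: (big_ind2 (fun x y => Rabs x <= y)) => [|a b c d h1 h2|i _].
- by rewrite Rabs_R0; lra.
- by have := Rabs_triang a c; lra.
- exact: Rle_refl.
Qed.

Lemma sumR_opp P F : \big[Rplus/0]_(i | P i) - F i = - \big[Rplus/0]_(i | P i) F i.
Proof.
transitivity (\big[Rplus/0]_(i | P i) (-1 * F i)); first by apply: eq_bigr => i _; ring.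
by rewrite sumR_mull; ring.
Qed.

Lemma sumR_delta F j : \big[Rplus/0]_i (if i == j then F i else 0) = F j.
Proof. by rewrite (bigD1 j) //= eqxx big1 ?Rplus_0_r // => i /negPf ->. Qed.

Lemma exists_pos_lower_bound F : (forall i, 0 < F i) -> exists g, 0 < g /\ forall i, g <= F i.
Proof.
move=> h; pose T := 1 + \big[Rplus/0]_i / F i.
have hinv i : 0 < / F i by apply: Rinv_0_lt_compat.
have hT i : / F i < T.
  by have := sumR_ge_term i (fun i => Rlt_le _ _ (hinv i)); rewrite /T; lra.
have hT0 : 0 < T.
  by have := @sumR_ge0 (fun _ => true) _ (fun i _ => Rlt_le _ _ (hinv i)); rewrite /T; lra.
exists (/ T); split; first exact: Rinv_0_lt_compat.
move=> i; rewrite -[F i]Rinv_inv; apply: Rinv_le_contravar; [exact: hinv|exact/Rlt_le].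
Qed.

End RealSums.

Lemma sumR_const n c : \big[Rplus/0]_(i < n) c = INR n * c.
Proof.
elim: n => [|n IH]; first by rewrite big_ord0 /=; ring.
by rewrite big_ord_recr IH S_INR /=; ring.
Qed.

Lemma Rdiv_le_iff a b c : 0 < b -> (a / b <= c <-> a <= c * b).
Proof.
move=> hb; have e : a / b * b = a by field; lra.
split=> h; first by rewrite -e; apply: Rmult_le_compat_r; lra.
by apply: (Rmult_le_reg_r b) => //; rewrite e.
Qed.

Lemma Rle_div_iff a b c : 0 < b -> (a <= c / b <-> a * b <= c).
Proof.
move=> hb; have e : c / b * b = c by field; lra.
split=> h; first by rewrite -e; apply: Rmult_le_compat_r; lra.
by apply: (Rmult_le_reg_r b) => //; rewrite e.
Qed.

Lemma Rdiv_lt_iff a b c : 0 < b -> (a / b < c <-> a < c * b).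
Proof.
move=> hb; have e : a / b * b = a by field; lra.
split=> h; first by rewrite -e; apply: Rmult_lt_compat_r.
by apply: (Rmult_lt_reg_r b) => //; rewrite e.
Qed.

Definition lincomb n a (u : vec n) b (v : vec n) : vec n := fun i => a * u i + b * v i.
Definition sqnorm n (v : vec n) := dot v v.

Section InnerProduct.
Variable n : nat.
Implicit Types (u v w : vec n) (A : mat n).

Lemma dotC u v : dot u v = dot v u.
Proof. by apply: eq_bigr => i _; ring. Qed.

Lemma dot_lincombl a u b v w : dot (lincomb a u b v) w = a * dot u w + b * dot v w.
Proof. by rewrite /dot -!sumR_mull -sumR_add; apply: eq_bigr => i _ /=; rewrite /lincomb; ring. Qed.

Lemma dot_lincombr a u b v w : dot w (lincomb a u b v) = a * dot w u + b * dot w v.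
Proof. by rewrite dotC dot_lincombl !(dotC w). Qed.

Lemma dot_scalel a u v : dot (fun i => a * u i) v = a * dot u v.
Proof. by rewrite /dot -sumR_mull; apply: eq_bigr => i _; ring. Qed.

Lemma dot_scaler a u v : dot v (fun i => a * u i) = a * dot v u.
Proof. by rewrite dotC dot_scalel dotC. Qed.

Lemma dot0l v : dot (fun _ => 0) v = 0.
Proof. by rewrite /dot big1 // => i _; ring. Qed.

Lemma sqnorm_ge0 v : 0 <= sqnorm v.
Proof. by apply: sumR_ge0 => i _; nra. Qed.

Lemma sqnorm_eq0 v : sqnorm v = 0 -> forall i, v i = 0.
Proof. by move=> h i; have := @sumR_eq0 _ (fun i => v i * v i) (fun i => ltac:(nra)) h i; nra. Qed.

Lemma sqnorm_gt0 v i : v i <> 0 -> 0 < sqnorm v.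
Proof.
move=> h; have [//|/esym/sqnorm_eq0/(_ i)//] := Rle_lt_or_eq_dec _ _ (sqnorm_ge0 v).
Qed.

Lemma sqnorm1_nonzero v : sqnorm v = 1 -> exists i, v i <> 0.
Proof.
move=> h; apply: NNPP => hn.
have : sqnorm v = 0 by rewrite /sqnorm /dot big1 // => i _; rewrite (not_ex_not_all _ _ hn i); ring.
lra.
Qed.

Lemma sqnorm1_entry v i : sqnorm v = 1 -> Rabs (v i) <= 1.
Proof.
move=> h; have := @sumR_ge_term _ (fun j => v j * v j) i (fun j => ltac:(nra)).
by rewrite -/(dot v v) -/(sqnorm v) h => hi; apply: Rabs_le; nra.
Qed.

Lemma Cauchy_Schwarz u v : (dot u v)^2 <= sqnorm u * sqnorm v.
Proof.
have hv := sqnorm_ge0 v; have hu := sqnorm_ge0 u.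
case: (Req_EM_T (sqnorm v) 0) => h0.
  have -> : dot u v = 0 by rewrite /dot big1 // => i _; rewrite (sqnorm_eq0 h0 i); ring.
  by rewrite h0; lra.
(* expand |u - t v|^2 >= 0 with t = <u,v>/|v|^2 *)
set t := dot u v / sqnorm v.
have ht : t * sqnorm v = dot u v by rewrite /t; field.
have := sqnorm_ge0 (lincomb 1 u (- t) v).
rewrite /sqnorm dot_lincombl !dot_lincombr (dotC v u) -/(sqnorm u) -/(sqnorm v) => h.
have : (dot u v)^2 = t * dot u v * sqnorm v by rewrite -ht; ring.
nra.
Qed.

Lemma mulv_lincomb A a u b v : mulv A (lincomb a u b v) = lincomb a (mulv A u) b (mulv A v).
Proof.
apply: functional_extensionality => i; rewrite /mulv /lincomb -!sumR_mull -sumR_add.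
by apply: eq_bigr => j _; ring.
Qed.

Lemma dot_mulv A u v :
  dot u (mulv A v) = \big[Rplus/0]_(i < n) \big[Rplus/0]_(j < n) (u i * A i j * v j).
Proof. by apply: eq_bigr => i _; rewrite -sumR_mull; apply: eq_bigr => j _; ring. Qed.

Lemma symmetric_dot A u v : symmetric A -> dot (mulv A u) v = dot u (mulv A v).
Proof.
move=> hA; rewrite dotC !dot_mulv exchange_big; apply: eq_bigr => i _; apply: eq_bigr => j _.
by rewrite (hA i j); ring.
Qed.

Lemma skew_dot A u v : skew A -> dot (mulv A u) v = - dot u (mulv A v).
Proof.
move=> hA; rewrite dotC !dot_mulv exchange_big -sumR_opp; apply: eq_bigr => i _.
by rewrite -sumR_opp; apply: eq_bigr => j _; rewrite (hA i j); ring.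
Qed.

End InnerProduct.

Section MatrixFacts.
Variable n : nat.

Lemma orthonormal_cols (o : 'I_n -> vec n) : orthonormal_basis o ->
  forall i j, \big[Rplus/0]_(k < n) (o k i * o k j) = if i == j then 1 else 0.
Proof.
move=> ho i j; pose O : 'M[R]_n := (\matrix_(k, i) o k i)%ring.
have /mulmx1C/matrixP/(_ i j) : (O *m O^T = 1%:M)%ring.
  apply/matrixP => a b; rewrite !mxE.
  transitivity (dot (o a) (o b)); first by apply: eq_bigr => k _; rewrite !mxE.
  by rewrite ho; case: (a == b).
rewrite !mxE => e; transitivity ((i == j)%:R : R)%ring; last by case: (i == j).
by rewrite -e; apply: eq_bigr => k _; rewrite !mxE.
Qed.

Lemma mx_nonzero_entry m p (M : 'M[R]_(m, p)) : (M != 0)%ring -> exists i j, M i j <> 0.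
Proof.
move=> hM; apply: NNPP => hn; move/eqP: hM; apply; apply/matrixP => i j.
by rewrite mxE; apply: NNPP => hij; apply: hn; exists i, j.
Qed.

Lemma ker_or_left_inverse (B : mat n) :
  (exists y : vec n, (exists i, y i <> 0) /\ forall i, mulv B y i = 0) \/
  (exists C : mat n, forall x i, mulv C (mulv B x) i = x i).
Proof.
pose Bm : 'M[R]_n := (\matrix_(i, j) B i j)%ring.
have [hu|hu] := boolP (Bm \in unitmx).
  right; exists (fun i j => invmx Bm i j) => x i.
  have /matrixP e := mulVmx hu.
  rewrite /mulv.
  transitivity (\big[Rplus/0]_(k < n) ((\big[Rplus/0]_(j < n) (invmx Bm i j * Bm j k)) * x k)).
    rewrite (eq_bigr (fun j => \big[Rplus/0]_(k < n) (invmx Bm i j * B j k * x k))); last first.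
      by move=> j _; rewrite -sumR_mull; apply: eq_bigr => k _; ring.
    rewrite exchange_big; apply: eq_bigr => k _; rewrite -sumR_mulr.
    by apply: eq_bigr => j _; rewrite mxE.
  rewrite -(sumR_delta x i); apply: eq_bigr => k _.
  move: (e i k); rewrite !mxE => ->; rewrite eq_sym.
  by case: (k == i); [exact: Rmult_1_l | exact: Rmult_0_l].
left.
have [i [j hij]] : exists i j, kermx Bm^T%ring i j <> 0.
  by apply: mx_nonzero_entry; rewrite kermx_eq0 row_free_unit unitmx_tr.
exists (fun k => kermx Bm^T%ring i k); split; first by exists j.
move=> l; move: (congr1 (fun M : 'M[R]_n => M i l) (mulmx_ker Bm^T%ring)).
rewrite !mxE => e; rewrite /mulv -[RHS]/(0%ring : R) -e; apply: eq_bigr => k _.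
by rewrite [(Bm^T)%ring _ _]mxE [Bm _ _]mxE; exact: Rmult_comm.
Qed.

Lemma exists_orthogonal_vector k (o : 'I_n -> vec n) : (k < n)%N ->
  exists y : vec n, (exists i, y i <> 0) /\ forall i : 'I_n, (i < k)%N -> dot y (o i) = 0.
Proof.
move=> hk; have hkn : (k <= n)%N by apply: ltnW.
pose M : 'M[R]_(n, k) := (\matrix_(b, i) o (widen_ord hkn i) b)%ring.
have [a [j haj]] : exists a j, kermx M a j <> 0.
  apply: mx_nonzero_entry; rewrite kermx_eq0 /row_free; apply/negP => /eqP e.
  by have := rank_leq_col M; rewrite e => /(leq_trans hk); rewrite ltnn.
exists (fun b => kermx M a b); split; first by exists j.
move=> i hi; move: (congr1 (fun N : 'M[R]_(n, k) => N a (Ordinal hi)) (mulmx_ker M)).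
rewrite !mxE => e; rewrite /dot -[RHS]/(0%ring : R) -e; apply: eq_bigr => b _.
by rewrite [M _ _]mxE; have -> : widen_ord hkn (Ordinal hi) = i by apply: val_inj.
Qed.

End MatrixFacts.

Section OrthonormalBasis.
Variables (n : nat) (o : 'I_n -> vec n).
Hypothesis ho : orthonormal_basis o.

Lemma orthonormal_sqnorm i : sqnorm (o i) = 1.
Proof. by rewrite /sqnorm ho eqxx. Qed.

Lemma orthonormal_expansion v i : v i = \big[Rplus/0]_(k < n) (dot (o k) v * o k i).
Proof.
rewrite (eq_bigr (fun k => \big[Rplus/0]_(j < n) (v j * (o k j * o k i)))); last first.
  by move=> k _; rewrite /dot -sumR_mulr; apply: eq_bigr => j _; ring.
rewrite exchange_big -[LHS](sumR_delta v i); apply: eq_bigr => j _.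
by rewrite sumR_mull (orthonormal_cols ho); case: (j == i); ring.
Qed.

Lemma parseval u v : dot u v = \big[Rplus/0]_(k < n) (dot (o k) u * dot (o k) v).
Proof.
transitivity (\big[Rplus/0]_(i < n) \big[Rplus/0]_(k < n) (dot (o k) u * (o k i * v i))).
  by apply: eq_bigr => i _; rewrite orthonormal_expansion -sumR_mulr; apply: eq_bigr => k _; ring.
by rewrite exchange_big; apply: eq_bigr => k _; rewrite sumR_mull.
Qed.

Lemma parseval_sqnorm v : sqnorm v = \big[Rplus/0]_(k < n) (dot (o k) v)^2.
Proof. by rewrite /sqnorm parseval; apply: eq_bigr => k _; ring. Qed.

End OrthonormalBasis.

Definition sqfrob n (A : mat n) := \big[Rplus/0]_(i < n) \big[Rplus/0]_(j < n) (A i j * A i j).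

Section FrobeniusNorm.
Variable n : nat.
Implicit Types (u v : vec n) (A : mat n).

Lemma sqfrob_ge0 A : 0 <= sqfrob A.
Proof. by apply: sumR_ge0 => i _; apply: sumR_ge0 => j _; nra. Qed.

Lemma sqnorm_mulv_le A v : sqnorm (mulv A v) <= sqfrob A * sqnorm v.
Proof.
rewrite /sqfrob -sumR_mulr; apply: sumR_le => i _.
have := Cauchy_Schwarz (A i) v; rewrite /sqnorm.
change (mulv A v i) with (dot (A i) v).
by change (\big[Rplus/0]_(j < n) _) with (dot (A i) (A i)); nra.
Qed.

Lemma dot_mulv_sq_le A u v : (dot u (mulv A v))^2 <= sqnorm u * (sqfrob A * sqnorm v).
Proof.
have := Cauchy_Schwarz u (mulv A v); have := sqnorm_mulv_le A v; have := sqnorm_ge0 u; nra.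
Qed.

Lemma dot_mulv_self_le A v : Rabs (dot v (mulv A v)) <= (sqfrob A + 1) * sqnorm v.
Proof.
have hF := sqfrob_ge0 A; have hN := sqnorm_ge0 v; have h := dot_mulv_sq_le A v v.
rewrite -[X in _ <= X]Rabs_pos_eq; last by nra.
apply: Rsqr_le_abs_0; rewrite /Rsqr.
have : sqnorm v * (sqfrob A * sqnorm v) <= (sqfrob A + 1) * sqnorm v * ((sqfrob A + 1) * sqnorm v).
  by nra.
nra.
Qed.

End FrobeniusNorm.

Lemma rayleigh_sup n (S : mat n) (W : vec n -> Prop) :
  (exists x, W x /\ exists i, x i <> 0) ->
  exists lam, (forall x, W x -> dot x (mulv S x) <= lam * sqnorm x) /\
    forall eta, 0 < eta -> exists x,
      W x /\ 0 < sqnorm x /\ lam * sqnorm x - dot x (mulv S x) < eta * sqnorm x.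
Proof.
move=> [x0 [hx0 [i hi]]].
pose E r := exists x, W x /\ 0 < sqnorm x /\ r = dot x (mulv S x) / sqnorm x.
have Eb : bound E.
  exists (sqfrob S + 1) => _ [x [_ [hp ->]]]; apply/Rdiv_le_iff => //.
  by have := dot_mulv_self_le S x; have := Rle_abs (dot x (mulv S x)); lra.
have [|lam [ub lub]] := completeness E Eb.
  by exists (dot x0 (mulv S x0) / sqnorm x0), x0; split => //; split => //; apply: sqnorm_gt0 hi.
exists lam; split=> [x hx|eta heta].
  have [hp|/esym h0] := Rle_lt_or_eq_dec _ _ (sqnorm_ge0 x).
    by apply/(Rdiv_le_iff _ _ hp)/ub; exists x.
  rewrite h0 /dot big1 ?Rmult_0_r; first lra.
  by move=> j _; rewrite (sqnorm_eq0 h0 j); ring.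
apply: NNPP => hn; have : lam <= lam - eta; last lra.
apply: lub => _ [x [hx [hp ->]]]; apply/Rdiv_le_iff => //.
apply: Rnot_lt_le => hc; apply: hn; exists x; do 2!split => //; lra.
Qed.

(* Cauchy-Schwarz for the semidefinite form [<x, A y>] on [W], applied to [y = A x]. *)
Lemma psd_sqnorm_mulv_le n (A : mat n) (W : vec n -> Prop) c :
  symmetric A -> 0 <= c ->
  (forall a x b y, W x -> W y -> W (lincomb a x b y)) ->
  (forall x, W x -> W (mulv A x)) ->
  (forall x, W x -> 0 <= dot x (mulv A x)) ->
  (forall y, W y -> dot y (mulv A y) <= c * sqnorm y) ->
  forall x, W x -> sqnorm (mulv A x) <= (c + 1) * dot x (mulv A x).
Proof.
move=> hA hc Wlin WA hpos hub x hx.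
set y := mulv A x; have hy : W y by apply: WA.
set s := / (c + 1).
have hs : 0 < s by apply: Rinv_0_lt_compat; lra.
have hsc : s * (c + 1) = 1 by rewrite /s; field; lra.
have := hpos _ (Wlin 1 x (- s) y hx hy).
rewrite mulv_lincomb dot_lincombl !dot_lincombr -/y -(symmetric_dot _ _ hA) -/y -/(sqnorm y).
move=> hq; have hy0 := sqnorm_ge0 y.
(* [s c <= 1] turns the [s^2] term into at most [s |y|^2] *)
have h1 : s * s * dot y (mulv A y) <= s * (s * c) * sqnorm y.
  by have := Rmult_le_compat_l (s * s) _ _ ltac:(nra) (hub y hy); lra.
have hsc' : s * c = 1 - s by lra.
rewrite hsc' in h1.
have : s * sqnorm y <= dot x y by nra.
move/(Rmult_le_compat_l (c + 1)) => /(_ ltac:(lra)).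
by rewrite -Rmult_assoc (Rmult_comm _ s) hsc Rmult_1_l.
Qed.

Lemma exists_unit_multiple n (y : vec n) i : y i <> 0 ->
  exists s, sqnorm (fun a => s * y a) = 1.
Proof.
move=> hy; have hN : 0 < sqnorm y := sqnorm_gt0 hy.
exists (/ sqrt (sqnorm y)); rewrite /sqnorm dot_scalel dot_scaler -/(sqnorm y).
rewrite -{3}(sqrt_sqrt _ (Rlt_le _ _ hN)); field.
by apply/Rgt_not_eq/sqrt_lt_R0.
Qed.

Section SpectralStep.
Variables (n k : nat) (S : mat n) (o : 'I_n -> vec n) (mu : 'I_n -> R).
Hypotheses (hS : symmetric S) (hk : (k < n)%N).
Hypothesis horth : forall i j : 'I_n, (i < k)%N -> (j < k)%N ->
  dot (o i) (o j) = if i == j then 1 else 0.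
Hypothesis heig : forall i : 'I_n, (i < k)%N -> forall a, mulv S (o i) a = mu i * o i a.

Let W (x : vec n) := forall i : 'I_n, (i < k)%N -> dot x (o i) = 0.

Let W_lincomb a x b y : W x -> W y -> W (lincomb a x b y).
Proof. by move=> hx hy i hi; rewrite dot_lincombl hx // hy //; ring. Qed.

Let W_mulv x : W x -> W (mulv S x).
Proof.
move=> hx i hi; rewrite symmetric_dot //.
have -> : mulv S (o i) = (fun a => mu i * o i a) by apply: functional_extensionality; apply: heig.
by rewrite dot_scaler hx //; ring.
Qed.

Let P : mat n := fun a b => \big[Rplus/0]_(i < n | (i < k)%N) (o i a * o i b).

Let mulv_P x a : mulv P x a = \big[Rplus/0]_(i < n | (i < k)%N) (dot (o i) x * o i a).
Proof.
rewrite /mulv /P.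
rewrite (eq_bigr (fun b => \big[Rplus/0]_(i < n | (i < k)%N) (o i a * o i b * x b))); last first.
  by move=> b _; rewrite sumR_mulr.
rewrite exchange_big; apply: eq_bigr => i _; rewrite /dot -sumR_mulr.
by apply: eq_bigr => b _; ring.
Qed.

Let mulv_P_W x : W x -> forall a, mulv P x a = 0.
Proof. by move=> hx a; rewrite mulv_P big1 // => i hi; rewrite dotC hx //; ring. Qed.

Let dot_mulv_P x (j : 'I_n) : (j < k)%N -> dot (mulv P x) (o j) = dot (o j) x.
Proof.
move=> hj; rewrite {1}/dot (eq_bigr (fun a => \big[Rplus/0]_(i < n | (i < k)%N)
    (dot (o i) x * (o i a * o j a)))); last first.
  by move=> a _; rewrite mulv_P -sumR_mulr; apply: eq_bigr => i _; ring.
rewrite exchange_big /= (eq_bigr (fun i => if i == j then dot (o i) x else 0)).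
  by rewrite (bigD1 j) //= eqxx big1 ?Rplus_0_r // => i /andP [_ /negPf ->].
by move=> i hi; rewrite sumR_mull; have := horth hi hj; rewrite /dot => ->; case: (i == j); ring.
Qed.

Section RayleighSupremum.
Variable lam : R.
Hypothesis hup : forall x, W x -> dot x (mulv S x) <= lam * sqnorm x.
Hypothesis happ : forall eta, 0 < eta -> exists x,
  W x /\ 0 < sqnorm x /\ lam * sqnorm x - dot x (mulv S x) < eta * sqnorm x.

Let A : mat n := fun a b => (if a == b then lam else 0) - S a b.

Let mulv_A x : mulv A x = lincomb lam x (-1) (mulv S x).
Proof.
apply: functional_extensionality => a; rewrite /mulv /lincomb.
rewrite -(sumR_delta (fun b => lam * x b) a) -sumR_mull -sumR_add; apply: eq_bigr => b _.
by rewrite /A eq_sym; case: (b == a); ring.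
Qed.

Let dot_mulv_A x : dot x (mulv A x) = lam * sqnorm x - dot x (mulv S x).
Proof. by rewrite mulv_A dot_lincombr /sqnorm; ring. Qed.

Let c := Rabs lam + sqfrob S + 2.

Let A_psd : forall x, W x -> sqnorm (mulv A x) <= c * dot x (mulv A x).
Proof.
have hA : symmetric A by move=> a b; rewrite /A (hS a b) eq_sym.
have -> : c = (Rabs lam + sqfrob S + 1) + 1 by rewrite /c; ring.
apply: psd_sqnorm_mulv_le => // [|x hx|x hx|y _].
- by have := Rabs_pos lam; have := sqfrob_ge0 S; lra.
- by rewrite mulv_A; apply: W_lincomb => //; apply: W_mulv.
- by rewrite dot_mulv_A; have := hup hx; lra.
- rewrite dot_mulv_A; have := dot_mulv_self_le S y; have := Rle_abs (- dot y (mulv S y)).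
  by have := Rle_abs lam; have := sqnorm_ge0 y; rewrite Rabs_Ropp; nra.
Qed.

(* on [o_i], i < k, [B = A + t P] acts as [lam - mu i + t > 0], so [ker B] lies in [W] *)
Let t := 1 + \big[Rplus/0]_(i < n) Rabs (lam - mu i).
Let B : mat n := fun a b => A a b + t * P a b.

Let mulv_B x : mulv B x = lincomb 1 (mulv A x) t (mulv P x).
Proof.
apply: functional_extensionality => a; rewrite /mulv /lincomb /B Rmult_1_l -sumR_mull -sumR_add.
by apply: eq_bigr => b _; ring.
Qed.

Let B_no_left_inverse C : ~ forall x i, mulv C (mulv B x) i = x i.
Proof.
(* a near-maximiser [x] of the Rayleigh quotient has [|B x|] small compared with [|x|] *)
move=> hC; have hFC := sqfrob_ge0 C.
have hc : 0 < c by have := Rabs_pos lam; have := sqfrob_ge0 S; rewrite /c; lra.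
pose eta := / (2 * c * (sqfrob C + 1)).
have heta : 0 < eta by apply: Rinv_0_lt_compat; nra.
have [x [hx [hp hq]]] := happ heta.
have eB : mulv B x = mulv A x.
  by apply: functional_extensionality => a; rewrite mulv_B /lincomb mulv_P_W //; ring.
have eC : mulv C (mulv B x) = x by apply: functional_extensionality => a; apply: hC.
have h1 := sqnorm_mulv_le C (mulv B x); rewrite eC eB in h1.
have h2 : sqnorm (mulv A x) <= c * (eta * sqnorm x).
  apply: (Rle_trans _ _ _ (A_psd hx)); rewrite dot_mulv_A.
  by apply: Rmult_le_compat_l; lra.
have h3 : sqfrob C * (c * eta) < 1.
  have -> : sqfrob C * (c * eta) = sqfrob C / (2 * (sqfrob C + 1)) by rewrite /eta; field; lra.
  by apply/Rdiv_lt_iff; lra.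
have : sqnorm x <= sqfrob C * (c * eta) * sqnorm x.
  have -> : sqfrob C * (c * eta) * sqnorm x = sqfrob C * (c * (eta * sqnorm x)) by ring.
  by apply: (Rle_trans _ _ _ h1); apply: Rmult_le_compat_l.
nra.
Qed.

Let ker_B_eigvec y : (forall a, mulv B y a = 0) -> W y /\ forall a, mulv S y a = lam * y a.
Proof.
move=> hy; have hyW : W y.
  move=> j hj; have : dot (mulv B y) (o j) = 0.
    have -> : mulv B y = (fun _ => 0) by apply: functional_extensionality.
    exact: dot0l.
  rewrite mulv_B dot_lincombl dot_mulv_P // symmetric_dot; last first.
    by move=> a b; rewrite /A (hS a b) eq_sym.
  have -> : mulv A (o j) = (fun a => (lam - mu j) * o j a).
    by apply: functional_extensionality => a; rewrite mulv_A /lincomb heig //; ring.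
  rewrite dot_scaler (dotC (o j)) => e.
  have ht : Rabs (lam - mu j) <= \big[Rplus/0]_(i < n) Rabs (lam - mu i) :=
    sumR_ge_term j (fun i => Rabs_pos _).
  have := Rle_abs (- (lam - mu j)); rewrite Rabs_Ropp => h.
  have : (lam - mu j + t) * dot y (o j) = 0 by rewrite /t in e *; lra.
  by case/Rmult_integral => //; rewrite /t; lra.
split=> // a; have := hy a.
by rewrite mulv_B mulv_A /lincomb mulv_P_W //; lra.
Qed.

Lemma rayleigh_sup_eigvec : exists w,
  sqnorm w = 1 /\ W w /\ forall a, mulv S w a = lam * w a.
Proof.
have [[y [[i hy0] hy]] | [C hC]] := ker_or_left_inverse B; last by case: (B_no_left_inverse hC).
have [hyW hSy] := ker_B_eigvec hy; have [s hs] := exists_unit_multiple hy0.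
exists (fun a => s * y a); split=> //; split=> [j hj|a].
  by rewrite dot_scalel hyW //; ring.
have -> : (fun a => s * y a) = lincomb s y 0 y.
  by apply: functional_extensionality => b; rewrite /lincomb; ring.
by rewrite mulv_lincomb /lincomb hSy; ring.
Qed.

End RayleighSupremum.

Lemma spectral_step : exists w lam,
  sqnorm w = 1 /\ (forall i : 'I_n, (i < k)%N -> dot w (o i) = 0) /\
  forall a, mulv S w a = lam * w a.
Proof.
have [|lam [hup happ]] := @rayleigh_sup n S W.
  by have [y [hy hyo]] := exists_orthogonal_vector o hk; exists y.
by have [w hw] := rayleigh_sup_eigvec hup happ; exists w, lam.
Qed.

End SpectralStep.

Lemma symmetric_partial_eigenbasis n (S : mat n) k : symmetric S -> (k <= n)%N ->
  exists (o : 'I_n -> vec n) (mu : 'I_n -> R),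
  (forall i j : 'I_n, (i < k)%N -> (j < k)%N -> dot (o i) (o j) = if i == j then 1 else 0) /\
  (forall i : 'I_n, (i < k)%N -> forall a, mulv S (o i) a = mu i * o i a).
Proof.
move=> hS; elim: k => [|k IH] hk; first by exists (fun _ _ => 0), (fun _ => 0).
have [o [mu [ho he]]] := IH (ltnW hk).
have [w [lam [hw1 [hwo hwe]]]] := spectral_step hS hk ho he.
exists (fun i : 'I_n => if (i : nat) == k then w else o i).
exists (fun i : 'I_n => if (i : nat) == k then lam else mu i).
split=> [i j|i]; rewrite ltnS leq_eqVlt.
- case/orP=> [/eqP hi|hi]; rewrite ltnS leq_eqVlt; case/orP=> [/eqP hj|hj].
  + rewrite hi hj eqxx; have -> : i = j by apply: val_inj; rewrite /= hi hj.
    by rewrite eqxx.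
  + rewrite hi eqxx (ltn_eqF hj) hwo //; case: eqP => // e.
    by move: hj; rewrite -e hi ltnn.
  + rewrite hj eqxx (ltn_eqF hi) dotC hwo //; case: eqP => // e.
    by move: hi; rewrite e hj ltnn.
  + by rewrite (ltn_eqF hi) (ltn_eqF hj) ho.
- by case/orP=> [/eqP ->|hi]; [rewrite eqxx | rewrite (ltn_eqF hi); apply: he].
Qed.

Lemma symmetric_eigenbasis n (S : mat n) : symmetric S ->
  exists (o : 'I_n -> vec n) (mu : 'I_n -> R),
  orthonormal_basis o /\ forall i a, mulv S (o i) a = mu i * o i a.
Proof.
move=> hS; have [o [mu [ho he]]] := symmetric_partial_eigenbasis hS (leqnn n).
by exists o, mu; split=> [i j|i]; [apply: ho | apply: he].
Qed.

Section CoordinateSubspaces.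
Variables (n : nat) (o : 'I_n -> vec n) (L : mat n).
Hypothesis ho : orthonormal_basis o.

Lemma not_invariant_of_coord (J : {set 'I_n}) j k : j \in J -> k \notin J ->
  dot (o k) (mulv L (o j)) <> 0 -> ~ invariant L (in_span J o).
Proof.
move=> hj hk hne hinv; apply: hne.
have [|c hc] := hinv (o j).
  exists (fun i => if i == j then 1 else 0) => a.
  rewrite (bigD1 j) //= eqxx big1 ?Rplus_0_r; first ring.
  by move=> i /andP [_ /negPf ->]; ring.
have -> : mulv L (o j) = (fun a => \big[Rplus/0]_(i in J) (c i * o i a)).
  exact: functional_extensionality.
rewrite /dot (eq_bigr (fun a => \big[Rplus/0]_(i in J) (c i * (o k a * o i a)))); last first.
  by move=> a _; rewrite -sumR_mull; apply: eq_bigr => i _; ring.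
rewrite exchange_big /= big1 // => i hi.
rewrite sumR_mull; have := ho k i; rewrite /dot => ->.
by case: eqP => [e|_]; [move: hk; rewrite e hi | ring].
Qed.

Lemma invariant_of_coords (J : {set 'I_n}) :
  (forall j k, j \in J -> k \notin J -> dot (o k) (mulv L (o j)) = 0) ->
  invariant L (in_span J o).
Proof.
move=> h v [c hc].
exists (fun k => \big[Rplus/0]_(i in J) (c i * dot (o k) (mulv L (o i)))) => a.
have -> : v = (fun a => \big[Rplus/0]_(i in J) (c i * o i a)) by apply: functional_extensionality.
have hLo i : i \in J ->
    mulv L (o i) a = \big[Rplus/0]_(k in J) (dot (o k) (mulv L (o i)) * o k a).
  move=> hi; rewrite (orthonormal_expansion ho (mulv L (o i)) a) (bigID (mem J)) /=.
  by rewrite [X in _ + X]big1 ?Rplus_0_r // => k hk; rewrite h //; ring.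
transitivity (\big[Rplus/0]_(i in J) (c i * mulv L (o i) a)).
  rewrite /mulv (eq_bigr (fun b => \big[Rplus/0]_(i in J) (c i * (L a b * o i b)))); last first.
    by move=> b _; rewrite -sumR_mull; apply: eq_bigr => i _; ring.
  by rewrite exchange_big /=; apply: eq_bigr => i _; rewrite sumR_mull.
rewrite (eq_bigr (fun i => \big[Rplus/0]_(k in J) (c i * dot (o k) (mulv L (o i)) * o k a))).
  by rewrite exchange_big /=; apply: eq_bigr => k _; rewrite sumR_mulr.
by move=> i hi; rewrite hLo // -sumR_mull; apply: eq_bigr => k _; ring.
Qed.

Lemma not_L_invarP : skew L -> ~ L_invar o L <->
  forall J : {set 'I_n}, (0 < #|J|)%N -> (#|J| < n)%N ->
  exists j k, j \in J /\ k \notin J /\ dot (o k) (mulv L (o j)) <> 0.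
Proof.
move=> hL; split=> [hn J h1 h2|h [_ [J [h1 [h2 hi]]]]].
  apply: NNPP => hc; apply: hn; split => //; exists J; do 2!split => //.
  apply: invariant_of_coords => j k hj hk; apply: NNPP => hne; apply: hc; by exists j, k.
have [j [k [hj [hk hne]]]] := h J h1 h2.
exact: (not_invariant_of_coord hj hk hne hi).
Qed.

Lemma not_L_invar_of_offdiag : skew L ->
  (forall j k, j != k -> dot (o k) (mulv L (o j)) <> 0) -> ~ L_invar o L.
Proof.
move=> hL h; apply/not_L_invarP => // J h1 h2.
have [j hj] : exists j, j \in J by apply/card_gt0P.
have /subsetPn [k _ hk] : ~~ ([set: 'I_n] \subset J).
  by apply: contraTN h2 => /subset_leq_card; rewrite cardsT card_ord leqNgt.
exists j, k; do 2!split => //; apply: h.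
by apply: contraNneq hk => <-.
Qed.

End CoordinateSubspaces.

Definition addm n (A B : mat n) : mat n := fun a b => A a b + B a b.

(* the matrix whose coordinates in the basis [o] are [w], i.e. [sum_(p,q) w p q o_p o_q^T] *)
Definition basis_mx n (o : 'I_n -> vec n) (w : mat n) : mat n :=
  fun a b => \big[Rplus/0]_(p < n) \big[Rplus/0]_(q < n) (w p q * o p a * o q b).

Lemma mulv_addm n (A B : mat n) x a : mulv (addm A B) x a = mulv A x a + mulv B x a.
Proof. by rewrite /mulv /addm -sumR_add; apply: eq_bigr => b _; ring. Qed.

Lemma INR_ord_lt n (i : 'I_n) : INR i < INR n.
Proof. by apply/lt_INR/ltP. Qed.

Lemma INR_ord_dist n (i j : 'I_n) : Rabs (INR i - INR j) < INR n.
Proof.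
by have := INR_ord_lt i; have := INR_ord_lt j; have := pos_INR i; have := pos_INR j;
  move=> *; apply: Rabs_def1; lra.
Qed.

Section BasisMatrix.
Variables (n : nat) (o : 'I_n -> vec n).
Implicit Type w : mat n.

Lemma basis_mx_symmetric w : symmetric w -> symmetric (basis_mx o w).
Proof.
move=> hw a b; rewrite /basis_mx exchange_big; apply: eq_bigr => p _; apply: eq_bigr => q _.
by rewrite (hw q p); ring.
Qed.

Lemma basis_mx_skew w : skew w -> skew (basis_mx o w).
Proof.
move=> hw a b; rewrite /basis_mx exchange_big -sumR_opp; apply: eq_bigr => p _.
by rewrite -sumR_opp; apply: eq_bigr => q _; rewrite (hw q p); ring.
Qed.

Hypothesis ho : orthonormal_basis o.

Lemma mulv_basis_mx w j a : mulv (basis_mx o w) (o j) a = \big[Rplus/0]_(p < n) (w p j * o p a).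
Proof.
rewrite /mulv /basis_mx.
rewrite (eq_bigr (fun b => \big[Rplus/0]_(p < n) \big[Rplus/0]_(q < n)
    (w p q * o p a * (o q b * o j b)))); last first.
  move=> b _; rewrite -sumR_mulr; apply: eq_bigr => p _; rewrite -sumR_mulr.
  by apply: eq_bigr => q _; ring.
rewrite exchange_big; apply: eq_bigr => p _; rewrite exchange_big.
rewrite -[RHS](sumR_delta (fun q => w p q * o p a) j); apply: eq_bigr => q _.
by rewrite sumR_mull -/(dot (o q) (o j)) ho; case: (q == j); ring.
Qed.

Lemma dot_basis_mx w j k : dot (o k) (mulv (basis_mx o w) (o j)) = w k j.
Proof.
have -> : mulv (basis_mx o w) (o j) = (fun a => \big[Rplus/0]_(p < n) (w p j * o p a)).
  by apply: functional_extensionality => a; apply: mulv_basis_mx.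
rewrite /dot (eq_bigr (fun a => \big[Rplus/0]_(p < n) (w p j * (o k a * o p a)))); last first.
  by move=> a _; rewrite -sumR_mull; apply: eq_bigr => p _; ring.
rewrite exchange_big /= -[RHS](sumR_delta (fun p => w p j) k); apply: eq_bigr => p _.
by rewrite sumR_mull -/(dot (o k) (o p)) ho eq_sym; case: (p == k); ring.
Qed.

Lemma near_addm_basis_mx (A w : mat n) c eps : (forall p q, Rabs (w p q) <= c) ->
  INR n * (INR n * c) < eps -> near eps A (addm A (basis_mx o w)).
Proof.
move=> hw hc a b; rewrite /addm (_ : A a b - _ = - basis_mx o w a b); last by ring.
rewrite Rabs_Ropp; apply: Rle_lt_trans hc.
apply: Rle_trans (sumR_abs_le _ _) _; rewrite -sumR_const; apply: sumR_le => p _.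
apply: Rle_trans (sumR_abs_le _ _) _; rewrite -sumR_const; apply: sumR_le => q _.
have h1 := sqnorm1_entry a (orthonormal_sqnorm ho p).
have h2 := sqnorm1_entry b (orthonormal_sqnorm ho q).
have h12 : Rabs (o p a) * Rabs (o q b) <= 1.
  by have := Rabs_pos (o p a); have := Rabs_pos (o q b); nra.
rewrite !Rabs_mult Rmult_assoc; apply: Rle_trans (hw p q).
by have := Rmult_le_compat_l _ _ _ (Rabs_pos (w p q)) h12; lra.
Qed.

End BasisMatrix.

Lemma is_eigvec_basis n (S : mat n) (o : 'I_n -> vec n) i lam : orthonormal_basis o ->
  (forall a, mulv S (o i) a = lam * o i a) -> is_eigvec S (o i) lam.
Proof. by move=> ho he; split=> //; exact/sqnorm1_nonzero/orthonormal_sqnorm. Qed.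

Lemma eigenbasis_of n (S : mat n) (o : 'I_n -> vec n) (mu : 'I_n -> R) :
  orthonormal_basis o -> (forall i a, mulv S (o i) a = mu i * o i a) -> eigenbasis S o.
Proof. by move=> ho he; split=> // i; exists (mu i); apply: is_eigvec_basis. Qed.

Lemma separate_eigenvalues n (S : mat n) (o : 'I_n -> vec n) (mu : 'I_n -> R) eps :
  symmetric S -> orthonormal_basis o -> (forall i a, mulv S (o i) a = mu i * o i a) ->
  0 < eps ->
  exists S', symmetric S' /\ near eps S S' /\ distinct_eigs S' /\ eigenbasis S' o.
Proof.
move=> hS ho he heps.
pose gap (pq : 'I_n * 'I_n) := if Req_EM_T (mu pq.1) (mu pq.2) then 1 else Rabs (mu pq.1 - mu pq.2).
have [|g [hg hgap]] := @exists_pos_lower_bound _ gap.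
  move=> [p q]; rewrite /gap /=; case: Req_EM_T => h /=; first lra.
  by apply: Rabs_pos_lt; lra.
pose nn := INR n; have hnn : 0 <= nn := pos_INR n.
have hnn3 : 0 <= nn * nn * nn by apply: Rmult_le_pos; nra.
(* shifting the [i]-th eigenvalue by [d i] separates them once [d n < g] *)
pose d := Rmin (eps / (2 * (nn * nn * nn + 1))) (g / (2 * (nn + 1))).
have hd : 0 < d by apply: Rmin_glb_lt; apply: Rdiv_lt_0_compat => //; lra.
have hd1 : d * (2 * (nn * nn * nn + 1)) <= eps.
  by apply/Rle_div_iff; [lra | exact: Rmin_l].
have hd2 : d * (2 * (nn + 1)) <= g by apply/Rle_div_iff; [lra | exact: Rmin_r].
pose w (p q : 'I_n) := if p == q then d * INR p else 0.
pose lam (i : 'I_n) := mu i + d * INR i.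
exists (addm S (basis_mx o w)).
have hlam j a : mulv (addm S (basis_mx o w)) (o j) a = lam j * o j a.
  rewrite mulv_addm he mulv_basis_mx // /lam.
  rewrite (eq_bigr (fun p => if p == j then d * INR p * o p a else 0)).
    by rewrite sumR_delta; ring.
  by move=> p _; rewrite /w; case: (p == j); ring.
split; [|split; [|split]].
- move=> a b; rewrite /addm hS basis_mx_symmetric // => p q.
  by rewrite /w eq_sym; case: eqP => [->|].
- apply: (@near_addm_basis_mx _ _ ho _ _ (d * nn)) => [p q|]; last first.
    by rewrite (_ : nn * (nn * (d * nn)) = d * (nn * nn * nn)); [nra | ring].
  rewrite /w; case: eqP => _; last by rewrite Rabs_R0; nra.
  have := INR_ord_lt p; have := pos_INR p; rewrite -/nn => hp0 hpn.
  by rewrite Rabs_mult !Rabs_pos_eq; try lra; apply: Rmult_le_compat_l; lra.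
- exists lam; split; last by move=> i; exists (o i); apply: is_eigvec_basis.
  move=> i j e; apply: NNPP => hij.
  have hdist := INR_ord_dist j i; rewrite -/nn in hdist.
  move: (hgap (i, j)); rewrite /gap /=; case: Req_EM_T => hm /= hgij.
    rewrite /lam hm in e; have /INR_eq e2 : INR i = INR j by nra.
    by apply: hij; apply: val_inj.
  have e3 : mu i - mu j = d * (INR j - INR i) by rewrite /lam in e; lra.
  rewrite e3 Rabs_mult Rabs_pos_eq in hgij; last lra.
  by have := Rmult_lt_compat_l d _ _ hd hdist; nra.
- exact: eigenbasis_of hlam.
Qed.

Lemma generic_skew_perturbation n (L : mat n) (o : 'I_n -> vec n) eps :
  orthonormal_basis o -> skew L -> 0 < eps ->
  exists L', skew L' /\ near eps L L' /\ ~ L_invar o L'.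
Proof.
move=> ho hL heps.
pose N p q := dot (o p) (mulv L (o q)).
have hN p q : N q p = - N p q by rewrite /N -skew_dot // dotC.
pose nn := INR n; have hnn : 0 <= nn := pos_INR n.
have hnn3 : 0 <= nn * nn * nn by apply: Rmult_le_pos; nra.
pose eta := eps / (2 * (nn * nn * nn + 1)).
have heta : 0 < eta by apply: Rdiv_lt_0_compat; lra.
(* fill every vanishing off-diagonal coordinate with a nonzero, skew-symmetric entry *)
pose w p q := if Req_EM_T (N p q) 0 then eta * (INR q - INR p) else 0.
have hw : skew w.
  move=> p q; rewrite /w hN; case: Req_EM_T => h1; case: Req_EM_T => h2 /=; try lra; ring.
exists (addm L (basis_mx o w)); split; [|split].
- by move=> a b; rewrite /addm hL (basis_mx_skew o hw); ring.
- apply: (@near_addm_basis_mx _ _ ho _ _ (eta * nn)) => [p q|]; last first.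
    have : eta * (2 * (nn * nn * nn + 1)) = eps by rewrite /eta; field; lra.
    by rewrite (_ : nn * (nn * (eta * nn)) = eta * (nn * nn * nn)); [nra | ring].
  rewrite /w; case: Req_EM_T => h /=; last by rewrite Rabs_R0; nra.
  rewrite Rabs_mult Rabs_pos_eq; last lra.
  by apply: Rmult_le_compat_l; [lra | apply/Rlt_le/INR_ord_dist].
- apply: not_L_invar_of_offdiag => // [a b|j k hjk].
    by rewrite /addm hL (basis_mx_skew o hw); ring.
  have -> : mulv (addm L (basis_mx o w)) (o j) =
      lincomb 1 (mulv L (o j)) 1 (mulv (basis_mx o w) (o j)).
    by apply: functional_extensionality => a; rewrite mulv_addm /lincomb; ring.
  rewrite dot_lincombr dot_basis_mx // -/(N k j) /w.
  have hkj : INR j - INR k <> 0.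
    by move/Rminus_diag_uniq/INR_eq => e; move/eqP: hjk; apply; apply: val_inj.
  case: Req_EM_T => h /=; last lra.
  by have := Rmult_integral_contrapositive_currified _ _ (Rgt_not_eq _ _ heta) hkj; lra.
Qed.

Section EigenvaluesInBasis.
Variables (n : nat) (S : mat n) (o : 'I_n -> vec n) (mu : 'I_n -> R).
Hypotheses (hS : symmetric S) (ho : orthonormal_basis o).
Hypothesis he : forall i a, mulv S (o i) a = mu i * o i a.

Lemma dot_eigvec_mulv k v : dot (o k) (mulv S v) = mu k * dot (o k) v.
Proof.
rewrite -symmetric_dot //.
have -> : mulv S (o k) = (fun a => mu k * o k a) by apply: functional_extensionality.
exact: dot_scalel.
Qed.

Lemma eigval_in_basis v l : (exists a, v a <> 0) -> (forall a, mulv S v a = l * v a) ->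
  exists i, mu i = l.
Proof.
move=> [a hva] hv; apply: NNPP => hn; apply: hva.
rewrite (orthonormal_expansion ho v a) big1 // => i _.
have : (mu i - l) * dot (o i) v = 0.
  have := dot_eigvec_mulv i v.
  have -> : mulv S v = (fun a => l * v a) by apply: functional_extensionality.
  by rewrite dot_scaler; lra.
by case/Rmult_integral => [h|->]; [case: hn; exists i; lra | ring].
Qed.

Lemma eigvals_injective : distinct_eigs S -> injective mu.
Proof.
move=> [lam [lam_inj hlam]].
have [f hf] : exists f : 'I_n -> 'I_n, forall j, mu (f j) = lam j.
  apply: (choice (fun j i => mu i = lam j)) => j.
  by have [v [hv0 hv]] := hlam j; apply: eigval_in_basis hv0 hv.
have f_inj : injective f by move=> j j' e; apply: lam_inj; rewrite -!hf e.
move=> i i' e; rewrite -(f_invF f_inj i) -(f_invF f_inj i') in e *.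
by rewrite !hf in e; rewrite (lam_inj _ _ e).
Qed.

End EigenvaluesInBasis.

Lemma eigenbasis_eigvals n (S : mat n) (o : 'I_n -> vec n) : eigenbasis S o ->
  exists mu, forall i a, mulv S (o i) a = mu i * o i a.
Proof.
move=> [_ h]; have [mu hmu] := choice _ h.
by exists mu => i; case: (hmu i).
Qed.

Section EigenvectorPerturbation.
Variables (n : nat) (S S' : mat n) (o p : 'I_n -> vec n) (mu nu : 'I_n -> R) (gam rho : R).
Hypotheses (hS : symmetric S) (ho : orthonormal_basis o).
Hypothesis he : forall i a, mulv S (o i) a = mu i * o i a.
Hypotheses (hp : orthonormal_basis p) (hpe : forall i a, mulv S' (p i) a = nu i * p i a).
Hypotheses (hgam : 0 < gam) (hgap : forall i j, i != j -> gam <= (mu i - mu j)^2).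
Hypotheses (hrg : rho <= gam / 16) (hfr : sqfrob (fun a b => S a b - S' a b) <= rho).

Let c i k := dot (o k) (p i).

Let sum_c_row i : \big[Rplus/0]_(k < n) (c i k)^2 = 1.
Proof. by rewrite -(orthonormal_sqnorm hp i) (parseval_sqnorm ho). Qed.

Let sum_c_col k : \big[Rplus/0]_(i < n) (c i k)^2 = 1.
Proof.
by rewrite -(orthonormal_sqnorm ho k) (parseval_sqnorm hp); apply: eq_bigr => i _; rewrite /c dotC.
Qed.

Lemma eigval_mismatch_le i : \big[Rplus/0]_(k < n) ((mu k - nu i)^2 * (c i k)^2) <= rho.
Proof.
pose D a b := S a b - S' a b.
have hD k : dot (o k) (mulv D (p i)) = (mu k - nu i) * c i k.
  have -> : mulv D (p i) = lincomb 1 (mulv S (p i)) (-1) (mulv S' (p i)).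
    apply: functional_extensionality => a; rewrite /mulv /lincomb /D -!sumR_mull -sumR_add.
    by apply: eq_bigr => b _; ring.
  rewrite dot_lincombr (dot_eigvec_mulv hS he).
  have -> : mulv S' (p i) = (fun a => nu i * p i a) by apply: functional_extensionality.
  by rewrite dot_scaler /c; ring.
have := sqnorm_mulv_le D (p i); rewrite orthonormal_sqnorm // (parseval_sqnorm ho).
rewrite (eq_bigr (fun k => (mu k - nu i)^2 * (c i k)^2)) => [|k _]; last by rewrite hD; ring.
by rewrite Rmult_1_r => h; apply: Rle_trans h hfr.
Qed.

Lemma exists_matching_eigval i : exists k, (mu k - nu i)^2 < gam / 4.
Proof.
apply: NNPP => hn; have := eigval_mismatch_le i; rewrite -(Rmult_1_r rho) -(sum_c_row i).
have : gam / 4 * \big[Rplus/0]_(k < n) (c i k)^2 <=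
    \big[Rplus/0]_(k < n) ((mu k - nu i)^2 * (c i k)^2).
  rewrite -sumR_mull; apply: sumR_le => k _.
  have : gam / 4 <= (mu k - nu i)^2 by apply: Rnot_lt_le => h; apply: hn; exists k.
  by have := pow2_ge_0 (c i k); nra.
by rewrite sum_c_row; lra.
Qed.

Lemma eigval_matching : exists sg : 'I_n -> 'I_n, injective sg /\
  (forall i, (mu (sg i) - nu i)^2 < gam / 4) /\ forall i, 1 - 4 * rho / gam <= (c i (sg i))^2.
Proof.
have [sg hsg] := choice _ exists_matching_eigval.
have far i k : k != sg i -> gam / 4 <= (mu k - nu i)^2.
  move=> hk; have := hgap hk; have := hsg i.
  have -> : mu k - mu (sg i) = (mu k - nu i) - (mu (sg i) - nu i) by ring.
  by move: (mu k - nu i) (mu (sg i) - nu i) => x y; nra.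
have hcsg i : 1 - 4 * rho / gam <= (c i (sg i))^2.
  have h1 : gam / 4 * \big[Rplus/0]_(k < n | k != sg i) (c i k)^2 <=
      \big[Rplus/0]_(k < n | k != sg i) ((mu k - nu i)^2 * (c i k)^2).
    rewrite -sumR_mull; apply: sumR_le => k hk.
    by have := far i k hk; have := pow2_ge_0 (c i k); nra.
  have hmis : (mu (sg i) - nu i)^2 * (c i (sg i))^2 +
      \big[Rplus/0]_(k < n | k != sg i) ((mu k - nu i)^2 * (c i k)^2) <= rho.
    by have := eigval_mismatch_le i; rewrite (bigD1 (sg i)).
  have hrow : (c i (sg i))^2 + \big[Rplus/0]_(k < n | k != sg i) (c i k)^2 = 1.
    by rewrite -(sum_c_row i) [RHS](bigD1 (sg i)).
  have := Rmult_le_pos _ _ (pow2_ge_0 (mu (sg i) - nu i)) (pow2_ge_0 (c i (sg i))) => h0.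
  have : \big[Rplus/0]_(k < n | k != sg i) (c i k)^2 <= 4 * rho / gam.
    have -> : 4 * rho / gam = rho / (gam / 4) by field; lra.
    by apply/Rle_div_iff; lra.
  lra.
exists sg; split; last by split.
move=> i i' e; apply: NNPP => hne.
have : 4 * rho / gam <= 1 / 4 by apply/Rdiv_le_iff => //; lra.
have : (c i (sg i))^2 + (c i' (sg i))^2 <= 1.
  by rewrite -(sum_c_col (sg i)); apply: (sumR_ge_two_terms (fun j => pow2_ge_0 _)); apply/eqP.
by have := hcsg i; have := hcsg i'; rewrite -e; lra.
Qed.

Lemma perturbed_eigvals_injective : injective nu.
Proof.
have [sg [sg_inj [hsg _]]] := eigval_matching.
move=> i i' e; apply: sg_inj; apply: NNPP => hne.
have := hgap (introN eqP hne); have := hsg i; have := hsg i'; rewrite -e.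
have -> : mu (sg i) - mu (sg i') = (mu (sg i) - nu i) - (mu (sg i') - nu i) by ring.
by move: (mu (sg i) - nu i) (mu (sg i') - nu i) => x y; nra.
Qed.

Lemma perturbed_eigenbasis_close : exists o', eigenbasis S' o' /\
  forall k, sqnorm (lincomb 1 (o' k) (-1) (o k)) <= 8 * rho / gam.
Proof.
have [sg [sg_inj [_ hcsg]]] := eigval_matching.
pose isg := invF sg_inj; have hisg k : sg (isg k) = k := f_invF sg_inj k.
(* [p (isg k)] is the eigenvector of [S'] near [+- o k]; fix its sign *)
pose s k := if Rle_dec 0 (c (isg k) k) then 1 else -1.
have hs2 k : s k * s k = 1 by rewrite /s; case: Rle_dec => h /=; ring.
have hsc k : s k * c (isg k) k = Rabs (c (isg k) k).
  rewrite /s; case: Rle_dec => h /=; first by rewrite Rabs_pos_eq //; ring.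
  by rewrite Rabs_left; [ring | lra].
exists (fun k a => s k * p (isg k) a); split; [apply: eigenbasis_of (fun k => nu (isg k)) _ _|].
- move=> k k'; rewrite dot_scalel dot_scaler hp.
  have [<-|hkk] := eqVneq k k'; first by rewrite !eqxx; have := hs2 k; lra.
  have /negPf -> : isg k != isg k'.
    by apply/eqP => e; move/eqP: hkk; apply; rewrite -(hisg k) -(hisg k') e.
  by ring.
- move=> k a; have -> : (fun a => s k * p (isg k) a) = lincomb (s k) (p (isg k)) 0 (p (isg k)).
    by apply: functional_extensionality => b; rewrite /lincomb; ring.
  by rewrite mulv_lincomb /lincomb hpe; ring.
move=> k.
have -> : sqnorm (lincomb 1 (fun a => s k * p (isg k) a) (-1) (o k)) =
    s k * s k * sqnorm (p (isg k)) - 2 * (s k * c (isg k) k) + sqnorm (o k).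
  by rewrite /sqnorm dot_lincombl !dot_lincombr !dot_scalel !dot_scaler /c (dotC (o k)); ring.
rewrite hs2 hsc (orthonormal_sqnorm ho) (orthonormal_sqnorm hp).
have hc1 : (c (isg k) k)^2 <= 1.
  have := Cauchy_Schwarz (o k) (p (isg k)).
  by rewrite (orthonormal_sqnorm ho) (orthonormal_sqnorm hp) /c; lra.
have hc2 : 1 - 4 * rho / gam <= (c (isg k) k)^2 by have := hcsg (isg k); rewrite hisg.
have : (c (isg k) k)^2 <= Rabs (c (isg k) k).
  by rewrite -pow2_abs in hc1 *; have := Rabs_pos (c (isg k) k); nra.
have -> : 8 * rho / gam = 2 * (4 * rho / gam) by field; lra.
lra.
Qed.

End EigenvectorPerturbation.

Lemma eigenbasis_perturbation n (S S' : mat n) (o : 'I_n -> vec n) (mu : 'I_n -> R) gam rho :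
  symmetric S -> symmetric S' -> orthonormal_basis o ->
  (forall i a, mulv S (o i) a = mu i * o i a) ->
  0 < gam -> (forall i j, i != j -> gam <= (mu i - mu j)^2) ->
  rho <= gam / 16 -> sqfrob (fun a b => S a b - S' a b) <= rho ->
  distinct_eigs S' /\ exists o', eigenbasis S' o' /\
    forall k, sqnorm (lincomb 1 (o' k) (-1) (o k)) <= 8 * rho / gam.
Proof.
move=> hS hS' ho he hgam hgap hrg hfr.
have [p [nu [hp hpe]]] := symmetric_eigenbasis hS'.
split; last exact: perturbed_eigenbasis_close hpe hgam hgap hrg hfr.
exists nu; split; first exact: perturbed_eigvals_injective hpe hgam hgap hrg hfr.
by move=> i; exists (p i); apply: is_eigvec_basis.
Qed.

Lemma coord_perturbation_sq_le n (A B : mat n) (u u' v v' : vec n) :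
  sqnorm u = 1 -> sqnorm u' = 1 -> sqnorm v' = 1 ->
  (dot u' (mulv B v') - dot u (mulv A v))^2 <=
  3 * (sqfrob (fun a b => A a b - B a b) + sqnorm (lincomb 1 u' (-1) u) * sqfrob A
       + sqfrob A * sqnorm (lincomb 1 v' (-1) v)).
Proof.
move=> hu hu' hv'.
pose E a b := A a b - B a b.
have -> : dot u' (mulv B v') - dot u (mulv A v) =
    - dot u' (mulv E v') + dot (lincomb 1 u' (-1) u) (mulv A v') +
    dot u (mulv A (lincomb 1 v' (-1) v)).
  have -> : mulv B v' = lincomb (-1) (mulv E v') 1 (mulv A v').
    apply: functional_extensionality => a; rewrite /lincomb /mulv /E -!sumR_mull -sumR_add.
    by apply: eq_bigr => b _; ring.
  by rewrite mulv_lincomb !dot_lincombl !dot_lincombr; ring.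
have hx := dot_mulv_sq_le E u' v'; have hy := dot_mulv_sq_le A (lincomb 1 u' (-1) u) v'.
have hz := dot_mulv_sq_le A u (lincomb 1 v' (-1) v).
rewrite hu' hv' in hx; rewrite hv' in hy; rewrite hu in hz.
move: (dot u' _) (dot _ (mulv A v')) (dot u _) hx hy hz => x y z hx hy hz.
have := pow2_ge_0 (x + y); have := pow2_ge_0 (y - z); have := pow2_ge_0 (x + z).
rewrite /E in hx; nra.
Qed.

Lemma sqfrob_sub_le_of_near n eps (A B : mat n) : near eps A B ->
  sqfrob (fun a b => A a b - B a b) <= INR n * (INR n * (eps * eps)).
Proof.
move=> h; rewrite /sqfrob -sumR_const; apply: sumR_le => a _; rewrite -sumR_const.
by apply: sumR_le => b _; have [h1 h2] := Rabs_def2 _ _ (h a b); nra.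
Qed.

Lemma near_sqfrob_le n rho : 0 < rho -> exists eps, 0 < eps /\
  forall A B : mat n, near eps A B -> sqfrob (fun a b => A a b - B a b) <= rho.
Proof.
move=> hrho; pose nn := INR n; have hnn : 0 <= nn := pos_INR n.
pose m := Rmin 1 rho; have hm0 : 0 < m by apply: Rmin_glb_lt; lra.
have hm1 : m <= 1 := Rmin_l _ _; have hmr : m <= rho := Rmin_r _ _.
exists (m / (nn * nn + 1)); split=> [|A B hAB]; first by apply: Rdiv_lt_0_compat; nra.
apply: Rle_trans (sqfrob_sub_le_of_near hAB) _; rewrite -/nn.
have -> : nn * (nn * (m / (nn * nn + 1) * (m / (nn * nn + 1)))) =
    m * m * (nn * nn) / ((nn * nn + 1) * (nn * nn + 1)) by field; nra.
apply/Rdiv_le_iff; first by apply: Rmult_lt_0_compat; nra.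
by apply: Rmult_le_compat; nra.
Qed.

Lemma exists_sq_lower_bound n (F : 'I_n -> 'I_n -> R) :
  exists m, 0 < m /\ forall p q, F p q <> 0 -> m <= (F p q)^2.
Proof.
pose G (pq : 'I_n * 'I_n) := if Req_EM_T (F pq.1 pq.2) 0 then 1 else (F pq.1 pq.2)^2.
have [|m [hm hmG]] := @exists_pos_lower_bound _ G.
  move=> [p q]; rewrite /G; case: Req_EM_T => h; first exact: Rlt_0_1.
  by rewrite -Rsqr_pow2; apply: Rsqr_pos_lt.
exists m; split=> // p q hpq; move: (hmG (p, q)); rewrite /G /=.
by case: Req_EM_T.
Qed.

Lemma openness n : open_in_Sso (@graph_l n).
Proof.
move=> S L [hS [hde [hL [o [[ho hoe] hno]]]]]; do 2!split => //.
have [mu he] := eigenbasis_eigvals (conj ho hoe).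
have mu_inj := eigvals_injective hS ho he hde.
have [gam [hgam hgam_le]] := exists_sq_lower_bound (fun p q => mu p - mu q).
have hgap p q : p != q -> gam <= (mu p - mu q)^2.
  by move=> hpq; apply: hgam_le => e; move/eqP: hpq; apply; apply: mu_inj; lra.
pose N k j := dot (o k) (mulv L (o j)).
have [m2 [hm2 hm2N]] := exists_sq_lower_bound N.
pose F := sqfrob L; have hF : 0 <= F := sqfrob_ge0 L.
(* [rho] bounds the squared Frobenius distances; it is small enough that no
   nonzero coordinate [N k j] of [L] can vanish in the perturbed basis *)
pose K := 6 * (1 + 16 * F / gam).
have hK : 0 < K.
  have : 0 <= 16 * F / gam by apply: Rmult_le_pos; [lra | apply/Rlt_le/Rinv_0_lt_compat].
  by rewrite /K; lra.
pose rho := Rmin (gam / 16) (m2 / K).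
have hrho : 0 < rho by apply: Rmin_glb_lt; apply: Rdiv_lt_0_compat; lra.
have hrg : rho <= gam / 16 := Rmin_l _ _.
have hrm : rho * K <= m2 by apply/Rle_div_iff => //; apply: Rmin_r.
have [eps [heps hnear]] := near_sqfrob_le n hrho.
exists eps; split=> // S' L' hS' hL' hnS hnL.
have [hdS' [o' [[ho' ho'e] hclose]]] :=
  eigenbasis_perturbation hS hS' ho he hgam hgap hrg (hnear _ _ hnS).
do 3!split => //; exists o'; split; first by split.
apply/(not_L_invarP ho' hL') => J h1 h2.
have [j [k [hj [hk hNkj]]]] := (proj1 (not_L_invarP ho hL) hno) J h1 h2.
exists j, k; split=> //; split=> // hz.
have := coord_perturbation_sq_le L L' (o j) (orthonormal_sqnorm ho k) (orthonormal_sqnorm ho' k)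
  (orthonormal_sqnorm ho' j).
rewrite hz -/F; have := hnear _ _ hnL; have := hclose k; have := hclose j; have := hm2N _ _ hNkj.
move: (sqnorm _) (sqnorm _) => dj dk hN hj' hk' hL'L.
have h3 : 3 * (rho + 8 * rho / gam * F + F * (8 * rho / gam)) = rho * K / 2.
  by rewrite /K; field; lra.
have := Rmult_le_compat_r F _ _ hF hk'; have := Rmult_le_compat_l F _ _ hF hj'.
by rewrite /N in hN; nra.
Qed.

Lemma density n : dense_in_Sso (@graph_l n).
Proof.
move=> S L eps hS hL heps.
have [o [mu [ho he]]] := symmetric_eigenbasis hS.
have [S' [hS' [hnS [hdS heS]]]] := separate_eigenvalues hS ho he heps.
have [L' [hL' [hnL hL'o]]] := generic_skew_perturbation ho hL heps.
by exists S', L'; split; [do 3!split => //; exists o | split].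
Qed.

(* Both halves hold for every [n]. *)
Theorem lemma5p2 (n : nat) (hn : (2 <= n)%N) :
  open_in_Sso (@graph_l n) /\ dense_in_Sso (@graph_l n).
Proof. by split; [exact: openness | exact: density]. Qed.
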